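(* Atomless $P$-operators are closed with respect to $d_M$: if $\{A_i\}$ is a sequence of $P$-operators each defined on an atomless probability space and $B$ is a $P$-operator on a probability space $\Omega_2$ with $d_M(A_i,B)\to0$, then $\Omega_2$ is atomless.
   Context: A $P$-operator on a probability space $\Omega$ is a linear $A:L^\infty(\Omega)\to L^1(\Omega)$, $v\mapsto vA$, with $\sup_v\|vA\|_1/\|v\|_\infty<\infty$; it is atomless if $\Omega$ is atomless. $\mathcal{S}_k(A)$ is the set of joint distributions on $\mathbb{R}^{2k}$ of $(v_1,\dots,v_k,v_1A,\dots,v_kA)$ over measurable $v_i:\Omega\to[-1,1]$; $d_M(A,B)=\sum_k2^{-k}d_H(\mathcal{S}_k(A),\mathcal{S}_k(B))$ with $d_H$ the Hausdorff distance induced by the Lévy–Prokhorov metric. *)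

From HB Require Import structures.
From mathcomp Require Import all_boot all_order all_algebra.
From mathcomp Require Import all_classical all_reals all_analysis.
Set Implicit Arguments. Unset Strict Implicit. Unset Printing Implicit Defensive.
Import Order.TTheory GRing.Theory Num.Theory.
Import numFieldNormedType.Exports.
Local Open Scope classical_set_scope.
Local Open Scope ring_scope.

Section PoperatorDefs.
Variable R : realType.

Definition atomless d (T : measurableType d) (P : probability T R) : Prop :=
  forall E : set T, measurable E -> (0 < P E)%E ->
    exists2 F : set T, measurable F /\ F `<=` E & (0 < P F < P E)%E.

Definition Linf d (T : measurableType d) (P : probability T R) (v : T -> R) : Prop :=
  measurable_fun setT v /\ exists c : R, {ae P, forall x, `|v x| <= c}.

(* A P-operator: a linear map L^oo(P) -> L^1(P), v |-> vA, with finite norm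
   sup_v ||vA||_1 / ||v||_oo.  It is represented on representatives: A maps
   essentially bounded measurable functions to integrable ones, respects
   a.e. equality, is linear up to a.e. equality, and is bounded. *)
Definition Poperator d (T : measurableType d) (P : probability T R)
    (A : (T -> R) -> (T -> R)) : Prop :=
  [/\ forall v, Linf P v ->
        measurable_fun setT (A v) /\ P.-integrable setT (fun x => (A v x)%:E),
      forall v w, Linf P v -> Linf P w -> {ae P, forall x, v x = w x} ->
        {ae P, forall x, A v x = A w x},
      forall (a b : R) v w, Linf P v -> Linf P w ->
        {ae P, forall x, A (fun y => a * v y + b * w y) x = a * A v x + b * A w x}
    & exists C : R, forall v (c : R), Linf P v -> {ae P, forall x, `|v x| <= c} ->
        (\int[P]_x (`|A v x|)%:E <= (C * c)%:E)%E].

Definition edist n (x y : 'rV[R]_n) : R :=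
  Num.sqrt (\sum_(i < n) (x ord0 i - y ord0 i) ^+ 2).

Definition eopen n (U : set 'rV[R]_n) : Prop :=
  forall x, U x -> exists2 e : R, 0 < e & [set y | edist y x < e] `<=` U.

Definition borel n : set (set 'rV[R]_n) := <<s [set U | eopen U] >>.

Definition neigh n (A : set 'rV[R]_n) (e : R) : set 'rV[R]_n :=
  [set x | exists2 a, A a & edist x a < e].

Definition law d (T : measurableType d) (P : probability T R) n
    (X : T -> 'rV[R]_n) : set 'rV[R]_n -> R :=
  fun A => fine (P (X @^-1` A)).

Definition LP n (mu nu : set 'rV[R]_n -> R) : R :=
  inf [set e : R | 0 < e /\ forall A, @borel n A ->
         mu A <= nu (neigh A e) + e /\ nu A <= mu (neigh A e) + e].

Definition dH n (S S' : set (set 'rV[R]_n -> R)) : R :=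
  Num.max (sup [set inf [set LP mu nu | nu in S'] | mu in S])
          (sup [set inf [set LP mu nu | mu in S] | nu in S']).

Definition jointvec d (T : measurableType d) (A : (T -> R) -> (T -> R)) k
    (v : 'I_k -> T -> R) (x : T) : 'rV[R]_(k + k) :=
  \row_(j < k + k) match fintype.split j with inl i => v i x | inr i => A (v i) x end.

Definition Sk d (T : measurableType d) (P : probability T R)
    (A : (T -> R) -> (T -> R)) (k : nat) : set (set 'rV[R]_(k + k) -> R) :=
  [set law P (jointvec A v) | v in
     [set v : 'I_k -> T -> R | forall i, measurable_fun setT (v i) /\
                                 forall x, -1 <= v i x <= 1]].

Arguments Sk {d T} P A k.

Definition dM d (T : measurableType d) (P : probability T R) (A : (T -> R) -> (T -> R))
    d' (T' : measurableType d') (P' : probability T' R) (B : (T' -> R) -> (T' -> R)) : R :=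
  limn (fun N => \sum_(1 <= k < N) (2 ^- k * dH (Sk P A k) (Sk P' B k))).

End PoperatorDefs.

From Pilot Require Import Defs.
From HB Require Import structures.
From mathcomp Require Import all_boot all_order all_algebra.
From mathcomp Require Import all_classical all_reals all_analysis.
From mathcomp Require Import measurable_realfun lra.
Import Order.TTheory GRing.Theory Num.Theory.
Import numFieldNormedType.Exports.
Local Open Scope classical_set_scope.
Local Open Scope ring_scope.
Set Implicit Arguments. Unset Strict Implicit. Unset Printing Implicit Defensive.

(* If P2 had an atom E of mass p, every measurable w : T2 -> [-1, 1] would be
   a.e. constant on E, so every law in S_1(B) would give mass at least p to a
   hyperplane {y_1 = c}.  An atomless space, in contrast, splits into finitely
   many pieces of mass < p/2, and the discrete quantile function v of such a
   splitting satisfies P(|v - c| < e) <= 2e + p/2 for all c and e.  Testing the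
   Levy-Prokhorov distance on the hyperplane {y_1 = c} puts the law of
   (v, vA_i) at distance at least p/6 from S_1(B), so d_M(A_i, B) >= p/12 for
   every i. *)

Section FineMeasure.
Context d (T : measurableType d) (R : realType).

Lemma fine_measureK (mu : {finite_measure set T -> \bar R}) (A : set T) :
  measurable A -> (fine (mu A))%:E = mu A.
Proof. by move=> mA; rewrite fineK // fin_num_measure. Qed.

Lemma le_fine_measure (mu : {finite_measure set T -> \bar R}) (A B : set T) :
  measurable A -> measurable B -> A `<=` B -> fine (mu A) <= fine (mu B).
Proof.
by move=> mA mB AB; rewrite -lee_fin !fine_measureK //; apply: le_measure; rewrite ?inE.
Qed.

Lemma fine_measureD (mu : {finite_measure set T -> \bar R}) (A B : set T) :
  measurable A -> measurable B -> B `<=` A ->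
  fine (mu (A `\` B)) = fine (mu A) - fine (mu B).
Proof.
move=> mA mB BA; rewrite measureD ?setIidr ?ltey_eq ?fin_num_measure //.
by rewrite fineB // fin_num_measure.
Qed.

Lemma fine_probability_le1 (P : probability T R) (A : set T) :
  measurable A -> fine (P A) <= 1.
Proof. by move=> mA; rewrite -lee_fin fine_measureK // probability_le1. Qed.

Lemma measurable_set_ltr (f g : T -> R) :
  measurable_fun setT f -> measurable_fun setT g -> measurable [set x | f x < g x].
Proof.
move=> mf mg; rewrite -[X in measurable X]setTI.
exact: (measurable_fun_ltr mf mg measurableT (Y := [set true]) I).
Qed.

Lemma measurable_set_ler (f g : T -> R) :
  measurable_fun setT f -> measurable_fun setT g -> measurable [set x | f x <= g x].
Proof.
move=> mf mg; rewrite -[X in measurable X]setTI.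
exact: (measurable_fun_ler mf mg measurableT (Y := [set true]) I).
Qed.

Lemma measurable_set_eqr (f g : T -> R) :
  measurable_fun setT f -> measurable_fun setT g -> measurable [set x | f x = g x].
Proof.
move=> mf mg; rewrite (_ : [set x | f x = g x] = setT `&` [set x | f x == g x]).
  exact: (measurable_fun_eqr mf mg measurableT (Y := [set true]) I).
by apply/seteqP; split => x /= => [->|[_ /eqP]].
Qed.

End FineMeasure.

Section Euclid.
Variable R : realType.

Lemma edist_coord_le n (x y : 'rV[R]_n) j : `|x ord0 j - y ord0 j| <= Defs.edist x y.
Proof.
rewrite /Defs.edist -sqrtr_sqr; apply: ler_wsqrtr; rewrite (bigD1 j) //= lerDl.
by apply: sumr_ge0 => i _; exact: sqr_ge0.
Qed.

Lemma edist_le_coord n (x y : 'rV[R]_n) (r : R) : 0 <= r ->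
  (forall j, `|x ord0 j - y ord0 j| <= r) -> Defs.edist x y <= n%:R * r.
Proof.
move=> r0 xy; rewrite /Defs.edist -[leRHS]ger0_norm ?mulr_ge0 // -sqrtr_sqr.
apply: ler_wsqrtr; apply: (le_trans (y := \sum_(j < n) r ^+ 2)).
  apply: ler_sum => j _; rewrite -real_normK ?num_real //.
  by rewrite lerXn2r ?nnegrE // (le_trans (xy j)).
rewrite sumr_const card_ord -mulr_natr exprMn.
have n1 : n%:R <= n%:R ^+ 2 :> R.
  by rewrite -natrX ler_nat; case: (n) => // m; rewrite expnS leq_pmulr ?expn_gt0.
have := sqr_ge0 r; nra.
Qed.

(* Cubes with rational centre and half-width: countably many, so unions of
   them are measurable. *)
Definition rat_box n (cr : {ffun 'I_n -> rat} * rat) : set 'rV[R]_n :=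
  [set y | forall j, `|y ord0 j - ratr (cr.1 j)| < ratr cr.2].

Lemma eopen_bigcup_rat_box n (U : set 'rV[R]_n) : eopen U ->
  U = \bigcup_(cr in [set cr | rat_box cr `<=` U]) rat_box cr.
Proof.
move=> oU; apply/seteqP; split => [x Ux|x [cr boxU /boxU]//].
have [e e0 ballU] := oU x Ux.
have [|h] := @rat_in_itvoo R 0 (e / (2 * n.+1%:R)); first by rewrite divr_gt0.
rewrite in_itv /= => /andP[h0 he].
have near_x j : exists q : rat, `|x ord0 j - ratr q| < ratr h.
  have /rat_in_itvoo[q] : x ord0 j - ratr h < x ord0 j + ratr h by rewrite ltrD2l gtrN.
  by rewrite in_itv /= => /andP[? ?]; exists q; rewrite ltr_norml; apply/andP; split; lra.
have [c xc] := choice near_x.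
exists ([ffun j => c j], h); last by move=> j /=; rewrite ffunE.
move=> y /= yc; apply: ballU; apply: (le_lt_trans (edist_le_coord (r := 2 * ratr h) _ _)).
- by rewrite mulr_ge0 // ltW.
- move=> j; have := yc j; have := xc j; rewrite ffunE !ltr_norml ler_norml.
  by move=> /andP[? ?] /andP[? ?]; apply/andP; split; lra.
have : n%:R * (2 * ratr h) < n.+1%:R * (2 * ratr h) :> R.
  by rewrite ltr_pM2r ?ltr_nat // mulr_gt0.
rewrite ltr_pdivlMr ?mulr_gt0 // in he; lra.
Qed.

Lemma measurable_preimage_borel d (T : measurableType d) n (X : T -> 'rV[R]_n) :
  (forall j, measurable_fun setT (fun x => X x ord0 j)) ->
  forall A, borel A -> measurable (X @^-1` A).
Proof.
move=> mX; pose C := [set A : set 'rV[R]_n | measurable (X @^-1` A)].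
have sigmaC : sigma_algebra setT C.
  split => [|A|F]; rewrite /C /=.
  - by rewrite preimage_set0.
  - by rewrite setTD preimage_setC; exact: measurableC.
  - by rewrite preimage_bigcup; exact: bigcupT_measurable.
apply: (smallest_sub sigmaC) => U /eopen_bigcup_rat_box ->; rewrite /C /=.
rewrite preimage_bigcup bigcup_mkcond; apply: countable_bigcupT_measurable.
  exact: countableP.
move=> cr; case: ifP => _ //.
rewrite (_ : X @^-1` _ = \bigcap_(j in [set: 'I_n])
    [set x | `|X x ord0 j - ratr (cr.1 j)| < ratr cr.2]).
  apply: fin_bigcap_measurable; first exact: finite_finset.
  move=> j _; apply: measurable_set_ltr; last exact: measurable_cst.
  by apply: measurableT_comp => //; apply: measurable_funB.
by apply/seteqP; split => x /= Xx j; [move=> _; exact: Xx | exact: Xx].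
Qed.

End Euclid.

Section UnitInterval.
Variable R : realType.
Implicit Types E : set R.

(* No nonemptiness hypothesis is needed since [sup set0 = inf set0 = 0]. *)
Lemma sup_itv01 E : (forall x, E x -> 0 <= x <= 1) -> 0 <= sup E <= 1.
Proof.
move=> E01; have [->|/set0P[x Ex]] := eqVneq E set0; first by rewrite sup0 lexx ler01.
have E1 : ubound E 1 by move=> y /E01 /andP[].
have /andP[x0 _] := E01 x Ex.
apply/andP; split; last by apply: ge_sup => //; exists x.
by rewrite (le_trans x0) // ub_le_sup //; exists 1.
Qed.

Lemma inf_itv01 E : (forall x, E x -> 0 <= x <= 1) -> 0 <= inf E <= 1.
Proof.
move=> E01; have [->|/set0P[x Ex]] := eqVneq E set0; first by rewrite inf0 lexx ler01.
have E0 : lbound E 0 by move=> y /E01 /andP[].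
have /andP[_ x1] := E01 x Ex.
apply/andP; split; first by apply: lb_le_inf => //; exists x.
by rewrite (le_trans _ x1) // ge_inf //; exists 0.
Qed.

Lemma half_first_le_dyadic_series (u : nat -> R) : (forall k, 0 <= u k <= 1) ->
  2^-1 * u 1%N <= limn (fun N => \sum_(1 <= k < N) (2 ^- k * u k)).
Proof.
move=> u01; set s := fun N => _.
have dyadic_sum N : \sum_(1 <= k < N.+1) 2 ^- k = 1 - 2 ^- N :> R.
  elim: N => [|N IH]; first by rewrite big_geq // expr0 invr1 subrr.
  by rewrite big_nat_recr //= IH exprS invfM; lra.
have s_nd : nondecreasing_seq s.
  apply/nondecreasing_seqP => -[|N]; first by rewrite /s !big_geq.
  rewrite /s [leRHS]big_nat_recr //= lerDl mulr_ge0 //.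
  by have /andP[] := u01 N.+1.
have s_bounded : has_ubound (range s).
  exists 1 => _ [[|N] _ <-]; rewrite /s; first by rewrite big_geq.
  apply: (le_trans (y := \sum_(1 <= k < N.+1) 2 ^- k)).
    by apply: ler_sum => k _; have /andP[? ?] := u01 k; rewrite ler_piMr.
  by rewrite dyadic_sum gerBl.
have := nondecreasing_cvgn_le s_nd (nondecreasing_is_cvgn s_nd s_bounded) 2.
by rewrite /s big_nat1 expr1.
Qed.

End UnitInterval.

Section LevyProkhorov.
Variables (R : realType) (n : nat).
Implicit Types mu nu : set 'rV[R]_n -> R.

Definition bounded_law mu := (forall A, 0 <= mu A) /\ (forall A, borel A -> mu A <= 1).

Lemma law_bounded d (T : measurableType d) (P : probability T R) (X : T -> 'rV[R]_n) :
  (forall j, measurable_fun setT (fun x => X x ord0 j)) -> bounded_law (law P X).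
Proof.
move=> mX; split => [A|A bA]; first exact: fine_ge0.
by apply: fine_probability_le1; exact: measurable_preimage_borel.
Qed.

Definition LP_admissible mu nu (e : R) := 0 < e /\ forall A, borel A ->
  mu A <= nu (neigh A e) + e /\ nu A <= mu (neigh A e) + e.

Lemma LP_admissible1 mu nu : bounded_law mu -> bounded_law nu -> LP_admissible mu nu 1.
Proof.
move=> [mu0 mu1] [nu0 nu1]; split => // A bA.
by have := mu1 A bA; have := nu1 A bA; have := mu0 (neigh A 1); have := nu0 (neigh A 1); lra.
Qed.

Lemma LP_itv mu nu : bounded_law mu -> bounded_law nu -> 0 <= LP mu nu <= 1.
Proof.
move=> mu_law nu_law; have adm1 := LP_admissible1 mu_law nu_law.
have adm0 : lbound (LP_admissible mu nu) 0 by move=> e [/ltW].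
apply/andP; split; first by apply: lb_le_inf => //; exists 1.
by apply: ge_inf => //; exists 0.
Qed.

Lemma LP_ge mu nu (r : R) : bounded_law mu -> bounded_law nu ->
  (forall e, LP_admissible mu nu e -> r <= e) -> r <= LP mu nu.
Proof.
by move=> mu_law nu_law ?; apply: lb_le_inf => //; exists 1; exact: LP_admissible1.
Qed.

Variables (S S' : set (set 'rV[R]_n -> R)).
Hypotheses (S_law : forall mu, S mu -> bounded_law mu)
  (S'_law : forall nu, S' nu -> bounded_law nu).

Lemma inf_LP_itv mu : bounded_law mu -> 0 <= inf [set LP mu nu | nu in S'] <= 1.
Proof. by move=> mu_law; apply: inf_itv01 => _ [nu /S'_law nu_law <-]; exact: LP_itv. Qed.

Lemma dH_itv : 0 <= dH S S' <= 1.
Proof.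
have inf_LP_itv' nu : bounded_law nu -> 0 <= inf [set LP mu nu | mu in S] <= 1.
  by move=> nu_law; apply: inf_itv01 => _ [mu /S_law mu_law <-]; exact: LP_itv.
rewrite /dH; have /andP[l0 l1] : 0 <= sup [set inf [set LP mu nu | nu in S'] | mu in S] <= 1.
  by apply: sup_itv01 => _ [mu /S_law /inf_LP_itv ? <-].
have /andP[r0 r1] : 0 <= sup [set inf [set LP mu nu | mu in S] | nu in S'] <= 1.
  by apply: sup_itv01 => _ [nu /S'_law /inf_LP_itv' ? <-].
by rewrite le_max l0 ge_max l1 r1.
Qed.

Lemma dH_ge mu (r : R) : S mu -> S' !=set0 ->
  (forall nu, S' nu -> r <= LP mu nu) -> r <= dH S S'.
Proof.
move=> Smu [nu0 S'nu0] r_le; rewrite /dH le_max; apply/orP; left.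
apply: (le_trans (y := inf [set LP mu nu | nu in S'])).
  by apply: lb_le_inf => [|_ [nu /r_le ? <-]//]; exists (LP mu nu0), nu0.
apply: ub_le_sup; last by exists mu.
by exists 1 => _ [mu' /S_law /inf_LP_itv /andP[] ? ? <-].
Qed.

End LevyProkhorov.

Section JointLaws.
Context d (T : measurableType d) (R : realType) (P : probability T R).
Variables (A : (T -> R) -> (T -> R)) (k : nat).

Lemma jointvec_lshift (v : 'I_k -> T -> R) x i : jointvec A v x ord0 (lshift k i) = v i x.
Proof. by rewrite /jointvec mxE (unsplitK (inl i)). Qed.

Lemma Linf_bounded (v : T -> R) :
  measurable_fun setT v -> (forall x, -1 <= v x <= 1) -> Linf P v.
Proof. by move=> mv v1; split => //; exists 1; apply: aeW => x; rewrite ler_norml. Qed.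

Lemma measurable_jointvec (v : 'I_k -> T -> R) : Poperator P A ->
  (forall i, measurable_fun setT (v i) /\ forall x, -1 <= v i x <= 1) ->
  forall j, measurable_fun setT (fun x => jointvec A v x ord0 j).
Proof.
case=> A_int _ _ _ v_bd j; under eq_fun do rewrite mxE.
case: (fintype.split j) => i; first exact: (v_bd i).1.
by have [] := A_int (v i) (Linf_bounded (v_bd i).1 (v_bd i).2).
Qed.

Lemma Sk_bounded_law : Poperator P A -> forall mu, Sk P A (k:=k) mu -> bounded_law mu.
Proof. by move=> A_op _ [v v_bd <-]; apply: law_bounded; exact: measurable_jointvec. Qed.

Lemma Sk_neq0 : Sk P A (k:=k) !=set0.
Proof.
exists (law P (jointvec A (fun _ _ => 0))), (fun _ _ => 0) => // i.
by split; [exact: measurable_cst | move=> x /=; rewrite lerN10 ler01].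
Qed.

End JointLaws.

Section Slabs.
Variables (R : realType) (n : nat) (j : 'I_n) (c : R).

Definition slab : set 'rV[R]_n := [set y | y ord0 j = c].

Lemma neigh_slab e : neigh slab e = [set y | `|y ord0 j - c| < e].
Proof.
apply/seteqP; split => y /=.
  by move=> [a <-]; exact: le_lt_trans (edist_coord_le y a j).
move=> yc; exists (\row_i (if i == j then c else y ord0 i)).
  by rewrite /slab /= mxE eqxx.
rewrite /Defs.edist (bigD1 j) //= big1 ?addr0 ?mxE ?eqxx ?sqrtr_sqr //.
by move=> i /negbTE ij; rewrite ?mxE ij subrr expr0n.
Qed.

Lemma borel_slab : borel slab.
Proof.
have -> : slab = setT `\` [set y | y ord0 j != c].
  by apply/seteqP; split => y /=; [move=> ->; rewrite eqxx | move=> [_ /negP/negPn/eqP]].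
apply: sigma_algebraCD; apply: sub_sigma_algebra => y yc.
exists `|y ord0 j - c|; first by rewrite normr_gt0 subr_eq0.
move=> z /= zy; apply/eqP => zc.
by have := le_lt_trans (edist_coord_le z y j) zy; rewrite zc distrC ltxx.
Qed.

End Slabs.

Section Atoms.
Context d (T : measurableType d) (R : realType).

Definition atom (mu : {measure set T -> \bar R}) (E : set T) :=
  [/\ measurable E, (0 < mu E)%E &
      forall F, measurable F -> F `<=` E -> ~ (0 < mu F < mu E)%E].

Lemma not_atomless_atom (P : probability T R) : ~ atomless P -> exists E, atom P E.
Proof.
move=> nP; apply: contrapT => no_atom; apply: nP => E mE PE0; apply: contrapT => nF.
by apply: no_atom; exists E; split => // F mF FE PF; apply: nF; exists F.
Qed.

Variables (mu : {finite_measure set T -> \bar R}) (E : set T).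
Hypothesis atomE : atom mu E.

Let mE : measurable E. Proof. by case: atomE. Qed.

Lemma atom_not_negligible : ~ mu.-negligible E.
Proof. by case: atomE => _ E0 _ /(negligibleP _ mE) E00; rewrite E00 ltxx in E0. Qed.

Lemma atom_dichotomy F : measurable F -> F `<=` E -> mu F = 0%E \/ mu F = mu E.
Proof.
move=> mF FE; case: atomE => _ _ /(_ F mF FE) not_mid.
have [->|F0] := eqVneq (mu F) 0%E; [by left | right].
apply/eqP; rewrite eq_le le_measure ?inE //= leNgt; apply/negP => FltE; apply: not_mid.
by rewrite FltE lt0e F0 measure_ge0.
Qed.

Lemma negligible_atom_setD F : measurable F -> mu (E `&` F) = mu E ->
  mu.-negligible (E `\` F).
Proof.
move=> mF EF; apply/negligibleP; first exact: measurableD.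
have E_split : mu E = (mu (E `\` F) + mu E)%E by rewrite -[in RHS]EF; exact: measureDI.
by rewrite -[LHS](addeK _ (fin_num_measure mu _ mE)) -E_split subee ?fin_num_measure.
Qed.

Variable f : T -> R.
Hypothesis mf : measurable_fun setT f.

Let G t := E `&` [set x | f x <= t].

Let mG t : measurable (G t).
Proof. by apply: measurableI mE _; apply: measurable_set_ler => //; exact: measurable_cst. Qed.

Let negligible_setD_G t : mu (G t) <> 0%E -> mu.-negligible (E `\` [set x | f x <= t]).
Proof.
move=> Gt0; apply: negligible_atom_setD.
  by apply: measurable_set_ler => //; exact: measurable_cst.
by case: (atom_dichotomy (mG t) (@subIsetl _ _ _)).
Qed.

Let D := [set t | mu (G t) = 0%E].

Let D_neq0 : D !=set0.
Proof.
apply: contrapT => D0; apply: atom_not_negligible.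
apply: (negligibleS (A := \bigcup_n (E `\` [set x | f x <= - n%:R]))).
  move=> x Ex; exists (Num.truncn (- f x)).+1 => //; split => //=.
  by apply/negP; rewrite -ltNge ltrNl truncnS_gt.
by apply: negligible_bigcup => n; apply: negligible_setD_G => Gn; apply: D0; exists (- n%:R).
Qed.

Let D_ub : has_ubound D.
Proof.
have [t Gt] : exists t, mu (G t) <> 0%E.
  apply: contrapT => Gt; apply: atom_not_negligible.
  apply: (negligibleS (A := \bigcup_n G n%:R)).
    move=> x Ex; exists (Num.truncn (f x)).+1 => //; split => //=.
    exact/ltW/truncnS_gt.
  apply: negligible_bigcup => n; apply/negligibleP => //.
  by apply: contrapT => Gn; apply: Gt; exists n%:R.
exists t => s Gs; rewrite leNgt; apply/negP => ts; apply: Gt.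
apply/eqP; rewrite eq_le measure_ge0 andbT -Gs le_measure ?inE //.
by move=> x [Ex /= fxt]; split => //=; rewrite (le_trans fxt) ?ltW.
Qed.

Lemma atom_ae_const : exists c, mu (E `&` [set x | f x = c]) = mu E.
Proof.
have hD : has_sup D by split; [exact: D_neq0 | exact: D_ub].
pose c := sup D; exists c.
have below : mu.-negligible (E `&` [set x | f x < c]).
  apply: (negligibleS (A := \bigcup_k G (c - k.+1%:R^-1))).
    by move=> x [Ex /ltr_add_invr[k fxk]]; exists k => //; split => //=; rewrite lerBrDr ltW.
  apply: negligible_bigcup => k; have k0 : 0 < k.+1%:R^-1 :> R by [].
  have [t Dt ct] := sup_adherent k0 hD; apply/negligibleP => //.
  apply/eqP; rewrite eq_le measure_ge0 andbT -[leRHS]Dt le_measure ?inE //.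
  by move=> x [Ex fx]; split => //=; rewrite (le_trans fx) ?ltW.
have above : mu.-negligible (E `&` [set x | c < f x]).
  apply: (negligibleS (A := \bigcup_k (E `\` [set x | f x <= c + k.+1%:R^-1]))).
    move=> x [Ex /ltr_add_invr[k fxk]]; exists k => //.
    by split => //=; apply/negP; rewrite -ltNge.
  apply: negligible_bigcup => k; apply: negligible_setD_G => Dk.
  have : c + k.+1%:R^-1 <= c by apply: sup_upper_bound.
  by rewrite gerDl leNgt invr_gt0 ltr0n.
have mc : measurable [set x | f x = c].
  by apply: measurable_set_eqr => //; exact: measurable_cst.
have null_off_c : mu (E `\` [set x | f x = c]) = 0%E.
  apply/negligibleP; first exact: measurableD.
  apply: (negligibleS (A := E `&` [set x | f x < c] `|` E `&` [set x | c < f x])).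
    by move=> x [Ex /eqP]; rewrite neq_lt => /orP[]; [left | right].
  exact: negligibleU.
transitivity (mu (E `\` [set x | f x = c]) + mu (E `&` [set x | f x = c]))%E.
  by rewrite null_off_c add0e.
by apply/esym; exact: measureDI.
Qed.

End Atoms.

Section ChainStepFunction.
Context d (T : measurableType d) (R : realType) (P : probability T R).
Local Notation pr A := (fine (P A)).
Variables (eps : R) (N : nat) (Q : nat -> set T).
Hypotheses (mQ : forall n, measurable (Q n)) (Q0 : Q 0%N = setT)
  (QS : forall n, Q n.+1 `<=` Q n) (QN : Q N.+1 = set0)
  (Q_eps : forall n, pr (Q n) - pr (Q n.+1) < eps).

Lemma chain_mono i j : (i <= j)%N -> Q j `<=` Q i.
Proof.
elim: j => [|j IH]; first by rewrite leqn0 => /eqP ->.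
by rewrite leq_eqVlt ltnS => /predU1P[<-//|/IH ij] x /QS /ij.
Qed.

Lemma chain_exit x : exists2 j, (j <= N)%N & Q j x /\ ~ Q j.+1 x.
Proof.
apply: contrapT => no_exit.
suff : forall j, (j <= N.+1)%N -> Q j x by move=> /(_ N.+1 (leqnn _)); rewrite QN.
elim => [|j IH] jN; first by rewrite Q0.
by apply: contrapT => Qj; apply: no_exit; exists j => //; split => //; apply: IH; exact: ltnW.
Qed.

Definition chain_level j := 1 - pr (Q j).

(* A discrete quantile function: by [chain_fun_exit] it equals [chain_level j]
   on [Q j `\` Q j.+1], so its level sets have mass < eps. *)
Definition chain_fun x :=
  \sum_(i < N.+1) \1_(Q i.+1) x * (chain_level i.+1 - chain_level i).

Lemma chain_fun_exit x j : (j <= N)%N -> Q j x -> ~ Q j.+1 x -> chain_fun x = chain_level j.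
Proof.
move=> jN Qjx Qj1x; rewrite /chain_fun.
transitivity (\sum_(i < N.+1 | (i < j)%N) (chain_level i.+1 - chain_level i)).
  rewrite [RHS]big_mkcond /=; apply: eq_bigr => i _; rewrite indicE.
  case: ltnP => ij; first by rewrite mem_set ?mul1r //; apply: (chain_mono ij).
  by rewrite memNset ?mul0r // => /(chain_mono (ij : (j.+1 <= i.+1)%N)).
rewrite -(big_ord_widen _ (fun i => chain_level i.+1 - chain_level i) (leqW jN)).
rewrite -(big_mkord xpredT (fun i => chain_level i.+1 - chain_level i)) telescope_sumr //.
by rewrite /chain_level Q0 probability_setT subrr subr0.
Qed.

Lemma measurable_chain_fun : measurable_fun setT chain_fun.
Proof.
apply: measurable_sum => i; apply: measurable_funM; last exact: measurable_cst.
exact: measurable_indic.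
Qed.

Lemma chain_fun_itv x : 0 <= chain_fun x <= 1.
Proof.
have [j jN [Qjx Qj1x]] := chain_exit x; rewrite (chain_fun_exit jN Qjx Qj1x) /chain_level.
by rewrite subr_ge0 fine_probability_le1 // gerBl fine_ge0.
Qed.

Lemma chain_fun_concentration c e : 0 < e ->
  pr [set x | `|chain_fun x - c| < e] <= 2 * e + eps.
Proof.
move=> e0; have eps0 : 0 < eps.
  by have := Q_eps N; rewrite QN measure0 /=; have := fine_ge0 (measure_ge0 P (Q N)); lra.
pose near_c j := (j <= N)%N && (`|chain_level j - c| < e).
have [[j0 j0c]|no_level] := pselect (exists j, near_c j); last first.
  rewrite (_ : [set x | _] = set0) ?measure0 /=; first lra.
  apply/seteqP; split => x //= xc; have [j jN [Qjx Qj1x]] := chain_exit x.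
  by apply: no_level; exists j; rewrite /near_c jN -(chain_fun_exit jN Qjx Qj1x).
have [j1 j1c j1_min] := ex_minnP (ex_intro _ j0 j0c).
have near_c_le j : near_c j -> (j <= N)%N by case/andP.
have [j2 j2c j2_max] := ex_maxnP (ex_intro _ j0 j0c) near_c_le.
have m_near : measurable [set x | `|chain_fun x - c| < e].
  apply: measurable_set_ltr; last exact: measurable_cst.
  by apply: measurableT_comp => //; apply: measurable_funB => //; exact: measurable_chain_fun.
apply: (le_trans (y := pr (Q j1 `\` Q j2.+1))).
  apply: le_fine_measure => //; first exact: measurableD.
  move=> x xc; have [j jN [Qjx Qj1x]] := chain_exit x.
  have jc : near_c j by rewrite /near_c jN -(chain_fun_exit jN Qjx Qj1x).
  split; first exact: (chain_mono (j1_min _ jc)).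
  by move=> /(chain_mono (j2_max _ jc : (j.+1 <= j2.+1)%N)).
rewrite fine_measureD //; last by apply: chain_mono; apply: leqW; exact: j1_min.
have := Q_eps j2; move: j1c j2c; rewrite /near_c /chain_level.
by rewrite !ltr_norml => /andP[_ /andP[? ?]] /andP[_ /andP[? ?]]; lra.
Qed.

End ChainStepFunction.

Section AtomlessChain.
Context d (T : measurableType d) (R : realType) (P : probability T R).
Local Notation pr A := (fine (P A)).

Lemma near_max_small_subset (eps : R) (R0 : set T) : 0 < eps -> measurable R0 ->
  exists S, [/\ measurable S, S `<=` R0, pr S < eps &
    forall S', measurable S' -> S' `<=` R0 -> pr S' < eps -> pr S' <= 2 * pr S].
Proof.
move=> eps0 mR0.
pose X := [set pr S' | S' in [set S' | [/\ measurable S', S' `<=` R0 & pr S' < eps]]].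
have hX : has_sup X.
  split; first by exists 0; exists set0; [split => //=; rewrite measure0 | rewrite measure0].
  by exists eps => _ [S' [_ _ ?] <-]; exact: ltW.
have le_supX S' : measurable S' -> S' `<=` R0 -> pr S' < eps -> pr S' <= sup X.
  by move=> *; apply: sup_upper_bound => //; exists S'.
have [supX0|supX_gt0] := leP (sup X) 0.
  exists set0; rewrite measure0 /= mulr0; split => // S' *.
  exact: le_trans (le_supX S' _ _ _) supX0.
have [_ [S [mS SR0 S_eps] <-] S_gt] := sup_adherent (divr_gt0 supX_gt0 (@ltr0Sn _ 1)) hX.
exists S; split => // S' mS' S'R0 S'_eps.
by have := le_supX _ mS' S'R0 S'_eps; lra.
Qed.

Hypothesis P_atomless : atomless P.

Lemma atomless_halve (E : set T) : measurable E -> 0 < pr E -> forall n : nat,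
  exists F, [/\ measurable F, F `<=` E, 0 < pr F & pr F * 2 ^+ n <= pr E].
Proof.
move=> mE E0; elim => [|n [F [mF FE F0 F_le]]].
  by exists E; split => //; rewrite expr0 mulr1.
have PF0 : (0 < P F)%E by rewrite -fine_measureK // lte_fin.
have [G [mG GF] /andP[]] := P_atomless mF PF0.
rewrite -(fine_measureK P mG) -(fine_measureK P mF) !lte_fin => G0 GltF.
have pow_ge0 : 0 <= 2 ^+ n :> R by rewrite exprn_ge0.
have [G_half|G_big] := leP (pr G * 2) (pr F).
  exists G; split => //; first exact: subset_trans GF FE.
  have : 0 <= pr F - pr G * 2 by rewrite subr_ge0.
  by rewrite exprS => /mulr_ge0 /(_ pow_ge0); nra.
exists (F `\` G); split; [exact: measurableD | by move=> x [/FE] | |].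
  by rewrite fine_measureD // subr_gt0.
rewrite fine_measureD // exprS.
have : 0 <= pr G * 2 - pr F by rewrite subr_ge0 ltW.
by move=> /mulr_ge0 /(_ pow_ge0); nra.
Qed.

Lemma atomless_small (E : set T) (e : R) : measurable E -> 0 < pr E -> 0 < e ->
  exists F, [/\ measurable F, F `<=` E, 0 < pr F & pr F < e].
Proof.
move=> mE E0 e0; pose n := Num.truncn e^-1.
have [F [mF FE F0 F_le]] := atomless_halve mE E0 n.
exists F; split => //.
have inv_e : e^-1 < n.+1%:R by exact: truncnS_gt.
have n_pow : n.+1%:R <= 2 ^+ n :> R by rewrite -natrX ler_nat ltn_expl.
have := fine_probability_le1 P mE; have := mulfV (lt0r_neq0 e0).
have := exprn_gt0 n (@ltr0Sn R 1).
by move: F_le inv_e n_pow; set a := 2 ^+ n; set b := e^-1; nra.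
Qed.

Variable eps : R.
Hypothesis eps0 : 0 < eps.

Lemma greedy_exhaustion : exists Rs : nat -> set T,
  [/\ Rs 0%N = setT, forall n, measurable (Rs n), forall n, Rs n.+1 `<=` Rs n,
      forall n, pr (Rs n) - pr (Rs n.+1) < eps & P (\bigcap_n Rs n) = 0%E].
Proof.
have /choice[g g_spec] : forall R0 : set T, exists S, measurable R0 ->
    [/\ measurable S, S `<=` R0, pr S < eps &
      forall S', measurable S' -> S' `<=` R0 -> pr S' < eps -> pr S' <= 2 * pr S].
  move=> R0; have [mR0|nmR0] := pselect (measurable R0); last by exists set0 => /nmR0.
  by have [S ?] := near_max_small_subset eps0 mR0; exists S.
pose Rs n := iter n (fun R0 => R0 `\` g R0) setT.
have mRs n : measurable (Rs n).
  by elim: n => //= n IH; apply: measurableD => //; case: (g_spec _ IH).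
have S_spec n := g_spec _ (mRs n).
have prRs n : pr (Rs n.+1) = pr (Rs n) - pr (g (Rs n)).
  by case: (S_spec n) => mS SRs _ _; rewrite fine_measureD.
exists Rs; split => // [n|n|]; first exact: subDsetl.
  by rewrite prRs opprB addrC subrK; case: (S_spec n).
have sum_S M : \sum_(n < M) pr (g (Rs n)) = 1 - pr (Rs M).
  elim: M => [|M IH]; first by rewrite big_ord0 /= probability_setT subrr.
  by rewrite big_ord_recr /= IH prRs; lra.
have mI : measurable (\bigcap_n Rs n) by exact: bigcapT_measurable.
(* A remainder of positive mass would contain some F with 0 < pr F < eps, so
   every greedy piece would have mass at least pr F / 2, although their total
   mass is at most 1. *)
apply/eqP; rewrite eq_le measure_ge0 andbT leNgt; apply/negP => I0.
have I0' : 0 < pr (\bigcap_n Rs n) by rewrite -lte_fin fine_measureK.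
have [F [mF FI F0 F_eps]] := atomless_small mI I0' eps0.
have F_le n : pr F <= 2 * pr (g (Rs n)).
  by case: (S_spec n) => _ _ _; apply => // x /FI; apply.
pose M := (Num.truncn (2 / pr F)).+1.
have : \sum_(n < M) pr F <= 2.
  apply: (le_trans (y := \sum_(n < M) 2 * pr (g (Rs n)))); first exact: ler_sum.
  by rewrite -mulr_sumr sum_S -[leRHS]mulr1 ler_pM2l // gerBl fine_ge0.
rewrite sumr_const card_ord -mulr_natl.
have := truncnS_gt (2 / pr F); rewrite -/M -(ltr_pM2r F0) divfK ?lt0r_neq0 //.
lra.
Qed.

Lemma atomless_chain : exists (N : nat) (Q : nat -> set T),
  [/\ forall n, measurable (Q n), Q 0%N = setT, forall n, Q n.+1 `<=` Q n,
      Q N.+1 = set0 & forall n, pr (Q n) - pr (Q n.+1) < eps].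
Proof.
have [Rs [Rs0 mRs RsS Rs_eps I0]] := greedy_exhaustion.
have [N RsN] : exists N, pr (Rs N) < eps.
  have Rs_nonincr : nonincreasing_seq Rs.
    by apply/nonincreasing_seqP => n; apply/subsetPset; exact: RsS.
  have Rs0_fin : (P (Rs 0%N) < +oo)%E by rewrite ltey_eq fin_num_measure.
  have : (P \o Rs) @ \oo --> 0%E.
    rewrite -I0.
    exact: nonincreasing_cvg_mu Rs0_fin mRs (bigcapT_measurable mRs) Rs_nonincr.
  move=> /fine_cvg /cvgr_lt /(_ eps eps0) [N _ RsN].
  by exists N; apply: (RsN N) => /=.
exists N, (fun n => if (n <= N)%N then Rs n else set0); split => [n|//|n||n].
- by case: ifP.
- by case: ifP => [n1N|_]; [rewrite (ltnW n1N) | exact: sub0set].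
- by rewrite ltnn.
case: ifP => nN; last first.
  by case: ifP => [/ltnW|_]; [rewrite nN | rewrite measure0 /= subrr].
case: ifP => n1N; first exact: Rs_eps.
have -> : n = N by apply/eqP; rewrite eqn_leq nN leqNgt n1N.
by rewrite measure0 /= subr0.
Qed.

Lemma atomless_diffuse_fun : exists v : T -> R,
  [/\ measurable_fun setT v, forall x, -1 <= v x <= 1 &
      forall c e, 0 < e -> pr [set x | `|v x - c| < e] <= 2 * e + eps].
Proof.
have [N [Q [mQ Q0 QS QN Q_eps]]] := atomless_chain.
exists (chain_fun P N Q); split.
- exact: measurable_chain_fun.
- by move=> x; have /andP[? ?] := chain_fun_itv P mQ Q0 QS QN x; apply/andP; split; lra.
- by move=> c e; exact: chain_fun_concentration.
Qed.

End AtomlessChain.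

Section AtomSeparation.
Variables (R : realType) (d : measure_display) (T : measurableType d) (P : probability T R).
Variables (d' : measure_display) (T' : measurableType d') (P' : probability T' R).

Lemma LP_ge_concentrated n (X : T -> 'rV[R]_n) (Y : T' -> 'rV[R]_n) (j : 'I_n)
    (f : T -> R) (g : T' -> R) (c p eps : R) :
  (forall i, measurable_fun setT (fun x => X x ord0 i)) ->
  (forall i, measurable_fun setT (fun y => Y y ord0 i)) ->
  (forall x, X x ord0 j = f x) -> (forall y, Y y ord0 j = g y) ->
  (forall e, 0 < e -> fine (P [set x | `|f x - c| < e]) <= 2 * e + eps) ->
  p <= fine (P' [set y | g y = c]) ->
  (p - eps) / 3 <= LP (law P X) (law P' Y).
Proof.
move=> mX mY Xf Yg f_diffuse g_atom.
apply: LP_ge; [exact: law_bounded | exact: law_bounded |].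
move=> e [e0 /(_ _ (borel_slab j c)) [_]]; rewrite neigh_slab /law.
have -> : Y @^-1` slab j c = [set y | g y = c].
  by apply/seteqP; split => y; rewrite /slab /= Yg.
have -> : X @^-1` [set z | `|z ord0 j - c| < e] = [set x | `|f x - c| < e].
  by apply/seteqP; split => x /=; rewrite Xf.
by have := f_diffuse e e0; lra.
Qed.

Variables (A : (T -> R) -> (T -> R)) (B : (T' -> R) -> (T' -> R)) (E : set T').
Hypotheses (A_op : Poperator P A) (P_atomless : atomless P) (B_op : Poperator P' B)
  (atomE : atom P' E).

Lemma dH_S1_ge_atom : fine (P' E) / 6 <= dH (Sk P A (k:=1)) (Sk P' B (k:=1)).
Proof.
set p := fine (P' E).
have p0 : 0 < p by case: atomE => mE E0 _; rewrite -lte_fin /p fine_measureK.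
have [v [mv v1 v_diffuse]] := atomless_diffuse_fun P_atomless (divr_gt0 p0 (ltr0n _ 2)).
pose vs : 'I_1 -> T -> R := fun _ => v.
have vs_bd i : measurable_fun setT (vs i) /\ forall x, -1 <= vs i x <= 1 by [].
have S1_mu : Sk P A (k:=1) (law P (jointvec A vs)) by exists vs.
apply: (dH_ge (Sk_bounded_law A_op) (Sk_bounded_law B_op) S1_mu (Sk_neq0 _ _ _)).
move=> _ [w w_bd <-]; have [mw0 _] := w_bd ord0.
have [c Ec] := atom_ae_const atomE mw0.
have -> : p / 6 = (p - p / 2) / 3 by lra.
apply: (LP_ge_concentrated (j := lshift 1 ord0) (f := v) (g := w ord0) (c := c)).
- exact: measurable_jointvec A_op vs_bd.
- exact: measurable_jointvec B_op w_bd.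
- by move=> x; rewrite jointvec_lshift.
- by move=> y; rewrite jointvec_lshift.
- exact: v_diffuse.
have m_wc : measurable [set y | w ord0 y = c].
  by apply: measurable_set_eqr => //; exact: measurable_cst.
rewrite /p -Ec; apply: (le_fine_measure P' _ m_wc) => [|y []//].
by case: atomE => mE _ _; exact: measurableI.
Qed.

Lemma dM_ge_atom : fine (P' E) / 12 <= dM P A P' B.
Proof.
apply: le_trans (half_first_le_dyadic_series _); last first.
  by move=> k; apply: dH_itv => mu; apply: Sk_bounded_law.
by have := dH_S1_ge_atom; lra.
Qed.

End AtomSeparation.

Unset Implicit Arguments.

Theorem lemma3p2 (R : realType)
  (dA : nat -> measure_display) (TA : forall i, measurableType (dA i))
  (PA : forall i, probability (TA i) R)
  (A : forall i, (TA i -> R) -> (TA i -> R))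
  (d2 : measure_display) (T2 : measurableType d2) (P2 : probability T2 R)
  (B : (T2 -> R) -> (T2 -> R)) :
  (forall i, Poperator (PA i) (A i)) ->
  (forall i, atomless (PA i)) ->
  Poperator P2 B ->
  (fun i => dM (PA i) (A i) P2 B) @ \oo --> (0 : R) ->
  atomless P2.
Proof.
move=> A_op A_atomless B_op dM_cvg; apply: contrapT => /not_atomless_atom[E atomE].
have p0 : 0 < fine (P2 E) / 12.
  by case: atomE => mE E0 _; rewrite divr_gt0 // -lte_fin fine_measureK.
have [N _ dM_small] := cvgr_lt 0 dM_cvg _ p0.
have := dM_small N (leqnn N); have := dM_ge_atom (A_op N) (A_atomless N) B_op atomE.
rewrite /=; lra.
Qed.
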